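(* In the production planning setting described in the context (general case), fix $\pmb{x}\in\mathbb{X}$ and let $G$, the arc lengths $c_{uw}$, arc weights $\delta_{uw}$ and the restricted longest path problem (RLP) be as defined in the context. Then for every real $C^*$: a cumulative demand scenario with cost $C^*$ is optimal for the adversarial problem $\max_{\pmb{D}\in\mathcal{U}^d}\sum_{t\in[T]}\max\{f_I(X_t,D_t),f_B(X_t,D_t)\}$ if and only if there is an optimal $\mathfrak{s}$-$\mathfrak{t}$ path of length $C^*$ for the RLP instance.
   Context: There are $T\ge 1$ periods, $[T]=\{1,\dots,T\}$. Given are a production cost $c^P$, an inventory cost $c^I$, a backordering cost $c^B$ and a selling price $b^P$, and a set $\mathbb{X}\subseteq\mathbb{R}^T_+$ of feasible production plans described by finitely many linear constraints; for a plan $X_t=\sum_{i\in[t]}x_i$. For $t\in[T-1]$ let $f_I(X_t,D_t)=c^I(X_t-D_t)$, $f_B(X_t,D_t)=c^B(D_t-X_t)$; for $t=T$ let $f_I(X_T,D_T)=c^I(X_T-D_T)+c^PX_T-b^PD_T$, $f_B(X_T,D_T)=c^B(D_T-X_T)+c^PX_T-b^PX_T$. Nominal cumulative demands $\widehat{D}_t\ge0$ are nondecreasing in $t$, deviations $0\le\Delta_t\le\widehat{D}_t$. $\mathcal{U}^d=\{\pmb{D}: D_t\le D_{t+1}\ (t\in[T-1]),\ D_t\in[\widehat{D}_t-\Delta_t,\widehat{D}_t+\Delta_t],\ |\{t:D_t\ne\widehat{D}_t\}|\le\Gamma^d\}$, $\Gamma^d\in\{0,\dots,T\}$ (intervals may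 overlap). For $k\in[T]$ let $\mathcal{D}_k=[\widehat{D}_k-\Delta_k,\widehat{D}_k+\Delta_k]\cap\bigcup_{t\in[T]}\{\widehat{D}_t-\Delta_t,\widehat{D}_t,\widehat{D}_t+\Delta_t\}$. The directed layered graph $G$ has layers $V_0=\{\mathfrak{s}\}$, $V_1,\dots,V_T$, $V_{T+1}=\{\mathfrak{t}\}$, where $V_k$ ($k\in[T]$) contains exactly one node $u$ for each value $D_u\in\mathcal{D}_k$. Arcs: $(\mathfrak{s},w)$ for every $w\in V_1$; $(u,w)$ for $u\in V_{k-1}$, $w\in V_k$ ($k=2,\dots,T$) whenever $D_u\le D_w$; $(u,\mathfrak{t})$ for every $u\in V_T$. An arc $(u,w)$ with $w\in V_k$, $k\in[T]$, has length $c_{uw}=\max\{f_I(X_k,D_w),f_B(X_k,D_w)\}$ and weight $\delta_{uw}=1$ if $D_w\ne\widehat{D}_k$ and $\delta_{uw}=0$ if $D_w=\widehat{D}_k$; arcs into $\mathfrak{t}$ have length $0$ and weight $0$. The RLP instance asks for an $\mathfrak{s}$-$\mathfrak{t}$ path $p$ with $\sum_{(u,w)\in p}\delta_{uw}\le\Gamma^d$ maximizing $\sum_{(u,w)\in p}c_{uw}$. The cost of a scenario $\pmb{D}$ is $\sum_{t\in[T]}\max\{f_I(X_t,D_t),f_B(X_t,D_t)\}$. *)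

(* Periods are indexed by nat t with 1 <= t <= T;
   plans x, demands D, Dhat, Delta are functions nat -> R (values outside
   [1,T] are irrelevant). *)
From HB Require Import structures.
From mathcomp Require Import all_boot all_order all_algebra.
Set Implicit Arguments. Unset Strict Implicit. Unset Printing Implicit Defensive.
Import Order.TTheory GRing.Theory Num.Theory.
Local Open Scope ring_scope.

Section Defs.
Variable R : realFieldType.

Definition inXset (T m : nat) (A : 'M[R]_(m, T)) (b : 'cV[R]_m) (x : nat -> R) : Prop :=
  (forall t, (1 <= t <= T)%N -> 0 <= x t) /\
  (forall i : 'I_m, \sum_(j < T) A i j * x j.+1 <= b i 0).

Definition cumX (x : nat -> R) (t : nat) : R := \sum_(1 <= i < t.+1) x i.

Definition fI (T : nat) (cP cI bP : R) (t : nat) (X D : R) : R :=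
  if t == T then cI * (X - D) + cP * X - bP * D else cI * (X - D).

Definition fB (T : nat) (cP cB bP : R) (t : nat) (X D : R) : R :=
  if t == T then cB * (D - X) + cP * X - bP * X else cB * (D - X).

Definition pcost (T : nat) (cP cI cB bP : R) (x : nat -> R) (t : nat) (d : R) : R :=
  Num.max (fI T cP cI bP t (cumX x t) d) (fB T cP cB bP t (cumX x t) d).

Definition scen_cost (T : nat) (cP cI cB bP : R) (x : nat -> R) (D : nat -> R) : R :=
  \sum_(1 <= t < T.+1) pcost T cP cI cB bP x t (D t).

Definition inUd (T : nat) (Dhat Delta : nat -> R) (Gam : nat) (D : nat -> R) : Prop :=
  (forall t, (1 <= t < T)%N -> D t <= D t.+1) /\
  (forall t, (1 <= t <= T)%N -> Dhat t - Delta t <= D t <= Dhat t + Delta t) /\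
  (\sum_(1 <= t < T.+1) (D t != Dhat t : nat) <= Gam)%N.

Definition breakpoints (T : nat) (Dhat Delta : nat -> R) : seq R :=
  flatten [seq [:: Dhat t - Delta t; Dhat t; Dhat t + Delta t] | t <- iota 1 T].

Definition inDk (T : nat) (Dhat Delta : nat -> R) (k : nat) (d : R) : bool :=
  (Dhat k - Delta k <= d <= Dhat k + Delta k) && (d \in breakpoints T Dhat Delta).

(* nodes of the layered graph G: source s, sink t, and node (k, d) of layer V_k *)
Inductive node : Type := Src | Snk | Nd of nat & R.

(* arcs of G (the target node is required to be a genuine node of its layer) *)
Definition arc (T : nat) (Dhat Delta : nat -> R) (u w : node) : bool :=
  match u, w with
  | Src, Nd k d => (k == 1)%N && inDk T Dhat Delta k d
  | Nd k d, Nd k' d' =>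
      [&& (2 <= k')%N, (k' <= T)%N, k' == k.+1, d <= d' & inDk T Dhat Delta k' d']
  | Nd k d, Snk => (1 <= k)%N && (k == T)
  | _, _ => false
  end.

Definition arc_len (T : nat) (cP cI cB bP : R) (x : nat -> R) (u w : node) : R :=
  match w with
  | Nd k d => pcost T cP cI cB bP x k d
  | _ => 0
  end.

Definition arc_wt (Dhat : nat -> R) (u w : node) : nat :=
  match w with
  | Nd k d => (d != Dhat k : nat)
  | _ => 0%N
  end.

(* an s-t path is given by its node sequence after s: Src :: p *)
Definition st_path (T : nat) (Dhat Delta : nat -> R) (p : seq node) : Prop :=
  path (arc T Dhat Delta) Src p /\ last Src p = Snk.

Definition path_len (T : nat) (cP cI cB bP : R) (x : nat -> R) (p : seq node) : R :=
  \sum_(e <- zip (Src :: p) p) arc_len T cP cI cB bP x e.1 e.2.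

Definition path_wt (Dhat : nat -> R) (p : seq node) : nat :=
  (\sum_(e <- zip (Src :: p) p) arc_wt Dhat e.1 e.2)%N.

Definition rlp_feasible (T : nat) (Dhat Delta : nat -> R) (Gam : nat) (p : seq node) : Prop :=
  st_path T Dhat Delta p /\ (path_wt Dhat p <= Gam)%N.

End Defs.

(* An s-t path of G visits one node per period, so it is a nondecreasing demand
   scenario with breakpoint values, whose cost is the length of the path and whose
   number of deviations is its weight; conversely every scenario of U^d with only
   breakpoint values is such a path.  It remains to show that the adversary loses
   nothing by playing breakpoint values only.  If a value v of a scenario D is not
   a breakpoint, let a < v < b be its neighbours among the breakpoints and the
   values of D.  Moving all periods with demand v to a, or all of them to b, stays
   in U^d, and D is a convex combination of these two scenarios.  The period cost
   max{f_I, f_B} is convex in the demand, so one of them costs at least as much as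
   D, and it has one non-breakpoint value fewer. *)

From HB Require Import structures.
From mathcomp Require Import all_boot all_order all_algebra.
From mathcomp Require Import ring lra zify.
(* After mathcomp, so that [arc] is the arc relation of G and not [path.arc]. *)
Set Implicit Arguments. Unset Strict Implicit. Unset Printing Implicit Defensive.
Import Order.TTheory GRing.Theory Num.Theory.
Local Open Scope ring_scope.

Lemma optimal_value_transfer (d : Order.disp_t) (V : porderType d) (X Y : Type)
    (P : X -> Prop) (Q : Y -> Prop) (f : X -> V) (g : Y -> V) (C : V) :
  (forall y, Q y -> exists2 x, P x & f x = g y) ->
  (forall x, P x -> exists2 y, Q y & (f x <= g y)%O) ->
  (exists x, P x /\ f x = C /\ forall x', P x' -> (f x' <= C)%O) <->
  (exists y, Q y /\ g y = C /\ forall y', Q y' -> (g y' <= C)%O).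
Proof.
move=> QP PQ; split=> [[x [Px [<- fx_max]]] | [y [Qy [<- gy_max]]]].
- have [y Qy fxy] := PQ x Px.
  have gy_max y' : Q y' -> (g y' <= f x)%O.
    by move=> /QP[x' Px' <-]; apply: fx_max.
  by exists y; split=> //; split=> //; apply/le_anti; rewrite fxy gy_max.
- have [x Px fxy] := QP y Qy.
  exists x; split=> //; split=> // x' /PQ[y' Qy' /le_trans]; apply.
  exact: gy_max.
Qed.

Lemma exists_max_lt (d : Order.disp_t) (T : orderType d) (s : seq T) (v : T) :
  has (fun y => (y < v)%O) s ->
  exists2 a, a \in s & (a < v)%O /\ forall y, y \in s -> (y < v)%O -> (y <= a)%O.
Proof.
case/hasP=> lo lo_s lo_v.
set a := \big[Order.max/lo]_(y <- s | (y < v)%O) y.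
exists a; last split.
- rewrite /a big_seq_cond; elim/big_ind: _ => // [y z ys zs | y /andP[]//].
  by rewrite /Order.max; case: ifP.
- rewrite /a; elim/big_ind: _ => // y z yv zv.
  by rewrite /Order.max; case: ifP.
- by move=> y ys yv; apply: le_bigmax_seq.
Qed.

Lemma exists_min_gt (d : Order.disp_t) (T : orderType d) (s : seq T) (v : T) :
  has (fun y => (v < y)%O) s ->
  exists2 b, b \in s & (v < b)%O /\ forall y, y \in s -> (v < y)%O -> (b <= y)%O.
Proof. exact: (@exists_max_lt _ T^d). Qed.

Section ConvexCombination.
Variables (R : realDomainType) (l : R).
Hypotheses (l_ge0 : 0 <= l) (l_le1 : l <= 1).

Lemma max_comb_le (a1 a2 b1 b2 : R) :
  Num.max (l * a1 + (1 - l) * a2) (l * b1 + (1 - l) * b2)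
  <= l * Num.max a1 b1 + (1 - l) * Num.max a2 b2.
Proof.
have l'_ge0 : 0 <= 1 - l by rewrite subr_ge0.
by rewrite ge_max; apply/andP; split; apply: lerD; apply: ler_wpM2l;
  rewrite // le_max lexx ?orbT.
Qed.

Lemma comb_le_max (a b : R) : l * a + (1 - l) * b <= Num.max a b.
Proof.
have l'_ge0 : 0 <= 1 - l by rewrite subr_ge0.
rewrite le_max; case: (leP a b) => ab; apply/orP; [right|left].
- have : 0 <= l * (b - a) by rewrite mulr_ge0 // subr_ge0.
  lra.
- have : 0 <= (1 - l) * (a - b) by rewrite mulr_ge0 // subr_ge0 ltW.
  lra.
Qed.

End ConvexCombination.

Lemma mem_iota1 (T t : nat) : (t \in iota 1 T) = (1 <= t <= T)%N.
Proof. by rewrite mem_iota add1n ltnS. Qed.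

Lemma big_zip_cons_snd (A V : Type) (idx : V) (op : V -> V -> V) (F : A -> V)
    (x0 : A) (s : seq A) :
  \big[op/idx]_(e <- zip (x0 :: s) s) F e.2 = \big[op/idx]_(y <- s) F y.
Proof. by rewrite -[in RHS](@unzip2_zip _ _ (x0 :: s) s) ?big_map //= leqnSn. Qed.

Section Adversary.
Variables (R : realFieldType) (T : nat) (cP cI cB bP : R) (x Dhat Delta : nat -> R).
Variable Gam : nat.

Local Notation pc := (pcost T cP cI cB bP x).
Local Notation cost := (scen_cost T cP cI cB bP x).
Local Notation bp := (breakpoints T Dhat Delta).
Local Notation U := (inUd T Dhat Delta Gam).
Local Notation arcG := (arc T Dhat Delta).
Local Notation inD := (inDk T Dhat Delta).
Local Notation len := (path_len T cP cI cB bP x).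
Local Notation feasible := (rlp_feasible T Dhat Delta Gam).

Lemma pcost_convex t (l d1 d2 : R) : 0 <= l -> l <= 1 ->
  pc t (l * d1 + (1 - l) * d2) <= l * pc t d1 + (1 - l) * pc t d2.
Proof.
move=> l_ge0 l_le1; rewrite /pcost; set X := cumX x t.
have -> : fI T cP cI bP t X (l * d1 + (1 - l) * d2) =
          l * fI T cP cI bP t X d1 + (1 - l) * fI T cP cI bP t X d2.
  by rewrite /fI; case: (t == T); ring.
have -> : fB T cP cB bP t X (l * d1 + (1 - l) * d2) =
          l * fB T cP cB bP t X d1 + (1 - l) * fB T cP cB bP t X d2.
  by rewrite /fB; case: (t == T); ring.
exact: max_comb_le.
Qed.

Lemma scen_cost_le_max_comb (l : R) (D D1 D2 : nat -> R) : 0 <= l -> l <= 1 ->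
  (forall t, D t = l * D1 t + (1 - l) * D2 t) -> cost D <= Num.max (cost D1) (cost D2).
Proof.
move=> l_ge0 l_le1 D_comb; apply: le_trans (comb_le_max l_ge0 l_le1 _ _).
rewrite /scen_cost !mulr_sumr -big_split /=.
by apply: ler_sum => t _; rewrite D_comb pcost_convex.
Qed.

Lemma breakpoints_mem t : (1 <= t <= T)%N ->
  [/\ Dhat t - Delta t \in bp, Dhat t \in bp & Dhat t + Delta t \in bp].
Proof.
rewrite -mem_iota1 => tT.
by split; apply/flatten_mapP; exists t; rewrite // !inE eqxx ?orbT.
Qed.

Definition reassign (D : nat -> R) (v w : R) (t : nat) : R :=
  if D t == v then w else D t.

Definition value_grid (D : nat -> R) : seq R := bp ++ [seq D t | t <- iota 1 T].

Lemma inUd_reassign D v w : U D -> v \notin bp ->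
  (forall y, y \in value_grid D -> (y < v -> y <= w) /\ (v < y -> w <= y)) ->
  U (reassign D v w).
Proof.
move=> [D_mono [D_bnd D_dev]] v_bp w_adj.
have D_grid t : (1 <= t <= T)%N -> D t \in value_grid D.
  by rewrite -mem_iota1 => tT; rewrite mem_cat map_f ?orbT.
have bp_grid y : y \in bp -> y \in value_grid D by rewrite mem_cat => ->.
have bp_neq y : y \in bp -> v != y by apply: contraTneq => <-.
rewrite /reassign; split; [|split].
- move=> t /[dup] /D_mono D_le /andP[t_ge1 t_lt].
  have tT : (1 <= t <= T)%N by rewrite t_ge1 ltnW.
  have t1T : (1 <= t.+1 <= T)%N by rewrite t_lt.
  case: (eqVneq (D t) v) => [Dt|Dt]; case: (eqVneq (D t.+1) v) => [Dt1|Dt1] //.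
  + apply: (w_adj _ (D_grid _ t1T)).2.
    by rewrite lt_neqAle eq_sym Dt1 -Dt D_le.
  + apply: (w_adj _ (D_grid _ tT)).1.
    by rewrite lt_neqAle Dt -Dt1 D_le.
- move=> t tT; case: (eqVneq (D t) v) => [Dt|_]; last exact: D_bnd.
  have [lo_bp _ hi_bp] := breakpoints_mem tT.
  have /andP[lo_v v_hi] := D_bnd t tT; rewrite Dt in lo_v v_hi.
  apply/andP; split.
  + by apply: (w_adj _ (bp_grid _ lo_bp)).1; rewrite lt_neqAle eq_sym bp_neq.
  + by apply: (w_adj _ (bp_grid _ hi_bp)).2; rewrite lt_neqAle bp_neq.
- apply: leq_trans D_dev; rewrite !big_seq; apply: leq_sum => t.
  rewrite mem_index_iota ltnS => tT; case: (eqVneq (D t) v) => [Dt|//].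
  have [_ hat_bp _] := breakpoints_mem tT.
  by rewrite Dt bp_neq // leq_b1.
Qed.

Lemma reassign_nonbreakpoint D t0 : U D -> (1 <= t0 <= T)%N -> D t0 \notin bp ->
  exists2 w, (w \in value_grid D) && (w != D t0) &
    U (reassign D (D t0) w) /\ cost D <= cost (reassign D (D t0) w).
Proof.
move=> UD t0T v_bp; set v := D t0 in v_bp *.
have [lo_bp _ hi_bp] := breakpoints_mem t0T.
have /andP[lo_v v_hi] := UD.2.1 t0 t0T.
have lo_lt_v : Dhat t0 - Delta t0 < v.
  by rewrite lt_neqAle lo_v andbT; apply: contraNneq v_bp => <-.
have v_lt_hi : v < Dhat t0 + Delta t0.
  by rewrite lt_neqAle v_hi andbT; apply: contraNneq v_bp => ->.
have [a a_grid [a_v a_max]] : exists2 a, a \in value_grid D &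
    a < v /\ forall y, y \in value_grid D -> y < v -> y <= a.
  by apply: exists_max_lt; apply/hasP; exists (Dhat t0 - Delta t0); rewrite ?mem_cat ?lo_bp.
have [b b_grid [v_b b_min]] : exists2 b, b \in value_grid D &
    v < b /\ forall y, y \in value_grid D -> v < y -> b <= y.
  by apply: exists_min_gt; apply/hasP; exists (Dhat t0 + Delta t0); rewrite ?mem_cat ?hi_bp.
have Ua : U (reassign D v a).
  apply: inUd_reassign => // y y_grid; split; first exact: a_max.
  by move=> /(lt_trans a_v)/ltW.
have Ub : U (reassign D v b).
  apply: inUd_reassign => // y y_grid; split; last exact: b_min.
  by move=> /lt_trans/(_ v_b)/ltW.
have ba_gt0 : 0 < b - a by rewrite subr_gt0 (lt_trans a_v v_b).
set l := (b - v) / (b - a).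
have l_ge0 : 0 <= l by rewrite /l divr_ge0 ?ltW // subr_gt0.
have l_le1 : l <= 1 by rewrite /l ler_pdivrMr // mul1r lerD2l lerN2 ltW.
have D_comb t : D t = l * reassign D v a t + (1 - l) * reassign D v b t.
  rewrite /reassign; case: (eqVneq (D t) v) => [->|_]; last by ring.
  by rewrite /l; field; rewrite lt0r_neq0.
have := scen_cost_le_max_comb l_ge0 l_le1 D_comb; rewrite le_max => /orP[cost_a|cost_b].
- by exists a; rewrite ?a_grid ?lt_eqF.
- by exists b; rewrite ?b_grid ?gt_eqF.
Qed.

Lemma exists_breakpoint_scenario_ge D : U D ->
  exists2 D', U D' /\ (forall t, (1 <= t <= T)%N -> D' t \in bp) & cost D <= cost D'.
Proof.
move=> UD; have : forall t, (1 <= t <= T)%N -> D t \notin bp ->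
    D t \in [seq D t | t <- iota 1 T].
  by move=> t; rewrite -mem_iota1 => tT _; apply: map_f.
move: [seq D t | t <- iota 1 T] => s.
have [n] := ubnP (size s); elim: n => // n IHn in D s UD *.
move=> s_lt s_cover.
have [D_bp | ] := altP (@allP _ (fun t => D t \in bp) (iota 1 T)).
  by exists D => //; split=> // t; rewrite -mem_iota1 => /D_bp.
case/allPn=> t0; rewrite mem_iota1 => t0T v_bp.
have [w /andP[w_grid w_v] [Uw cost_le]] := reassign_nonbreakpoint UD t0T v_bp.
set s' := filter (predC1 (D t0)) s.
have s'_lt : (size s' < n)%N.
  rewrite -ltnS; apply: leq_trans s_lt; rewrite ltnS /s' size_filter.
  rewrite -(count_predC (predC1 (D t0)) s) -[X in (X < _)%N]addn0 ltn_add2l -has_count.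
  by apply/hasP; exists (D t0); rewrite ?s_cover //= eqxx.
have s'_cover t : (1 <= t <= T)%N -> reassign D (D t0) w t \notin bp ->
    reassign D (D t0) w t \in s'.
  move=> tT; rewrite /reassign mem_filter /=.
  case: (eqVneq (D t) (D t0)) => [_|Dt] val_bp; last by rewrite Dt s_cover.
  move: w_grid; rewrite w_v mem_cat (negPf val_bp) /= => /mapP[t' t'T w_eq].
  by rewrite mem_iota1 in t'T; rewrite w_eq s_cover // -w_eq.
have [D' UD' cost_le'] := IHn _ _ Uw s'_lt s'_cover.
by exists D'; last exact: le_trans cost_le cost_le'.
Qed.

Definition demand_path (g : nat -> R) (k n : nat) : seq (node R) :=
  [seq Nd t (g t) | t <- iota k n] ++ [:: Snk R].

Definition demand_step (g : nat -> R) (t : nat) : bool :=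
  (g t <= g t.+1) && inD t.+1 (g t.+1).

Lemma path_demand_path g k n : (1 <= k)%N -> (k + n)%N = T ->
  path arcG (Nd k (g k)) (demand_path g k.+1 n) = all (demand_step g) (iota k n).
Proof.
elim: n k => [|n IHn] k k_ge1 kT /=.
  by rewrite addn0 in kT; rewrite k_ge1 kT eqxx.
have k1T : (k.+1 <= T)%N by rewrite -kT addnS ltnS leq_addr.
by rewrite -IHn ?addSnnS // ltnS k_ge1 k1T eqxx.
Qed.

Lemma path_src_demand_path g : (1 <= T)%N ->
  path arcG (Src R) (demand_path g 1 T) = inD 1 (g 1) && all (demand_step g) (iota 1 T.-1).
Proof.
move=> T_ge1.
have -> : demand_path g 1 T = Nd 1 (g 1) :: demand_path g 2 T.-1.
  by rewrite -[in LHS](prednK T_ge1).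
by rewrite /= path_demand_path // add1n prednK.
Qed.

Lemma path_len_demand_path g : len (demand_path g 1 T) = cost g.
Proof.
rewrite /path_len (eq_bigr (fun e => arc_len T cP cI cB bP x (Src R) e.2)) //.
by rewrite big_zip_cons_snd big_cat big_map big_seq1 /= addr0 /scen_cost /index_iota subn1.
Qed.

Lemma path_wt_demand_path g :
  path_wt Dhat (demand_path g 1 T) = (\sum_(1 <= t < T.+1) (g t != Dhat t))%N.
Proof.
rewrite /path_wt (eq_bigr (fun e => arc_wt Dhat (Src R) e.2)) //.
by rewrite big_zip_cons_snd big_cat big_map big_seq1 /= addn0 /index_iota subn1.
Qed.

Lemma demand_path_of_path k d q : (k <= T)%N ->
  path arcG (Nd k d) q -> last (Nd k d) q = Snk R ->
  exists g, q = demand_path g k.+1 (T - k).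
Proof.
elim: q k d => [|w q IHq] k d kT //= /andP[]; case: w => // [|k' d'].
  move=> /andP[_ /eqP->]; case: q {IHq} => // _ _.
  by exists (fun=> 0); rewrite subnn.
move=> /and5P[_ k'T /eqP k'_eq _ _] q_path q_last; subst k'.
have [g ->] := IHq _ _ k'T q_path q_last.
exists (fun t => if t == k.+1 then d' else g t).
rewrite -(subnSK k'T) /demand_path /= eqxx; congr (_ :: _ ++ _).
by apply/eq_in_map => t; rewrite mem_iota => /andP[t_gt _]; rewrite gtn_eqF.
Qed.

Lemma demand_path_of_st_path p : (1 <= T)%N -> st_path T Dhat Delta p ->
  exists g, p = demand_path g 1 T.
Proof.
move=> T_ge1 []; case: p => [|w q] //= /andP[]; case: w => // k d /andP[/eqP-> _].
move=> q_path q_last; have [g ->] := demand_path_of_path T_ge1 q_path q_last.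
exists (fun t => if t == 1%N then d else g t).
rewrite /demand_path -[in RHS](prednK T_ge1) subn1 /=; congr (_ :: _ ++ _).
by apply/eq_in_map => t; rewrite mem_iota => /andP[t_gt _]; rewrite gtn_eqF.
Qed.

Lemma rlp_feasible_demand_path g : (1 <= T)%N ->
  feasible (demand_path g 1 T) <->
  U g /\ (forall t, (1 <= t <= T)%N -> g t \in bp).
Proof.
move=> T_ge1; rewrite /rlp_feasible /st_path path_src_demand_path // path_wt_demand_path.
split=> [[[/andP[g1 /allP steps] _] dev] | [[mono [bnd dev]] g_bp]].
- have step t : (1 <= t < T)%N -> demand_step g t.
    by move=> tT; apply: steps; rewrite mem_iota; lia.
  have inD_g t : (1 <= t <= T)%N -> inD t (g t).
    case: t => [//|[_|t tT]]; first exact: g1.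
    by have /andP[] := step t.+1 tT.
  split; last by move=> t /inD_g/andP[].
  split; [|split] => //; first by move=> t /step/andP[].
  by move=> t /inD_g/andP[].
- split=> //; split; last by rewrite last_cat.
  rewrite /inDk bnd ?g_bp //=; apply/allP => t; rewrite mem_iota => tT.
  by rewrite /demand_step /inDk mono ?bnd ?g_bp //; lia.
Qed.

Lemma scenario_of_rlp_path p : (1 <= T)%N -> feasible p ->
  exists2 D, U D & cost D = len p.
Proof.
move=> T_ge1 p_feas; have [g p_g] := demand_path_of_st_path T_ge1 p_feas.1.
move: p_feas; rewrite p_g rlp_feasible_demand_path // => -[Ug _].
by exists g; rewrite ?path_len_demand_path.
Qed.

Lemma rlp_path_of_scenario D : (1 <= T)%N -> U D ->
  exists2 p, feasible p & cost D <= len p.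
Proof.
move=> T_ge1 UD; have [D' D'_feas cost_le] := exists_breakpoint_scenario_ge UD.
exists (demand_path D' 1 T); first exact/rlp_feasible_demand_path.
by rewrite path_len_demand_path.
Qed.

End Adversary.

Theorem proposition1 (R : realFieldType) (T m : nat) (A : 'M[R]_(m, T)) (b : 'cV[R]_m)
  (cP cI cB bP : R) (Dhat Delta : nat -> R) (Gam : nat) (x : nat -> R) (Cstar : R) :
  (1 <= T)%N ->
  (Gam <= T)%N ->
  (forall t, (1 <= t <= T)%N -> 0 <= Dhat t) ->
  (forall t, (1 <= t < T)%N -> Dhat t <= Dhat t.+1) ->
  (forall t, (1 <= t <= T)%N -> 0 <= Delta t <= Dhat t) ->
  inXset A b x ->
  (exists D, inUd T Dhat Delta Gam D /\ scen_cost T cP cI cB bP x D = Cstar /\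
     forall D', inUd T Dhat Delta Gam D' -> scen_cost T cP cI cB bP x D' <= Cstar)
  <->
  (exists p, rlp_feasible T Dhat Delta Gam p /\ path_len T cP cI cB bP x p = Cstar /\
     forall p', rlp_feasible T Dhat Delta Gam p' -> path_len T cP cI cB bP x p' <= Cstar).
Proof.
move=> T_ge1 _ _ _ _ _; apply: optimal_value_transfer.
- by move=> p /(scenario_of_rlp_path cP cI cB bP x T_ge1).
- by move=> D /(rlp_path_of_scenario cP cI cB bP x T_ge1).
Qed.
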